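(* Let $\{H(\theta)\}_{\theta\in[0,s]}$ be a differentiable family of self-adjoint operators on a finite-dimensional Hilbert space such that each $H(\theta)$ has a unique ground state and spectral gap $\Delta(\theta)\ge\Delta>0$. Let $\Psi_0(\theta)$ be the differentiable family of normalized ground states satisfying the parallel transport condition $\langle\Psi_0(\theta)|\partial_\theta\Psi_0(\theta)\rangle=0$. Let $U_\Delta(\theta)$ solve $\partial_\theta U_\Delta(\theta)=i\,\mathcal S_\Delta(H(\theta),\partial_\theta H(\theta))\,U_\Delta(\theta)$, $U_\Delta(0)=\mathbb 1$. Then $\Psi_0(\theta)=U_\Delta(\theta)\Psi_0(0)$ for all $\theta\in[0,s]$.
   Context: Filter function: for $\Delta>0$, $W_\Delta:\mathbb R\to\mathbb R$ is a fixed function, continuous except at $t=0$ (where it is right-continuous with $W_\Delta(0)=1/2=\|W_\Delta\|_\infty$), odd away from $t=0$, with $\|W_\Delta\|_1\le K/\Delta$ for a constant $K$, decaying like $\exp(-c_0\Delta|t|/\ln^2(\Delta|t|))$, and whose Fourier transform $\hat W_\Delta(\lambda)=\int_{\mathbb R}W_\Delta(t)e^{i\lambda t}dt$ equals $i/\lambda$ for all $|\lambda|\ge\Delta$. For self-adjoint $H$ and an operator $A$, $\mathcal S_\Delta(H,A)=\int_{\mathbb R}W_\Delta(t)\,e^{itH}Ae^{-itH}\,dt$. *)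

From Stdlib Require Import Reals Arith.
Open Scope R_scope.

Definition C := (R * R)%type.
Definition Re (z : C) : R := fst z.
Definition Im (z : C) : R := snd z.
Definition C0 : C := (0, 0).
Definition C1 : C := (1, 0).
Definition Ci : C := (0, 1).
Definition RtoC (r : R) : C := (r, 0).
Definition Cadd (z w : C) : C := (Re z + Re w, Im z + Im w).
Definition Cmul (z w : C) : C :=
  (Re z * Re w - Im z * Im w, Re z * Im w + Im z * Re w).
Definition Cconj (z : C) : C := (Re z, - Im z).
Definition Cnorm2 (z : C) : R := Re z * Re z + Im z * Im z.

Fixpoint Csum (n : nat) (f : nat -> C) : C :=
  match n with
  | O => C0
  | S m => Cadd (Csum m f) (f m)
  end.

(* Only the entries with indices < n are meaningful. *)
Definition Vec := nat -> C.
Definition Mat := nat -> nat -> C.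

Definition mmul (n : nat) (A B : Mat) : Mat :=
  fun i j => Csum n (fun k => Cmul (A i k) (B k j)).
Definition mvmul (n : nat) (A : Mat) (v : Vec) : Vec :=
  fun i => Csum n (fun k => Cmul (A i k) (v k)).
Definition mscale (c : C) (A : Mat) : Mat := fun i j => Cmul c (A i j).
Definition vscale (c : C) (v : Vec) : Vec := fun i => Cmul c (v i).
Definition mid : Mat := fun i j => if Nat.eqb i j then C1 else C0.

Definition mat_eq (n : nat) (A B : Mat) : Prop :=
  forall i j, (i < n)%nat -> (j < n)%nat -> A i j = B i j.
Definition vec_eq (n : nat) (u v : Vec) : Prop :=
  forall i, (i < n)%nat -> u i = v i.

Definition inner (n : nat) (u v : Vec) : C :=
  Csum n (fun k => Cmul (Cconj (u k)) (v k)).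
Definition vnorm2 (n : nat) (v : Vec) : R := Re (inner n v v).
Definition vec_nonzero (n : nat) (v : Vec) : Prop :=
  exists k, (k < n)%nat /\ v k <> C0.

Definition self_adjoint (n : nat) (H : Mat) : Prop :=
  forall i j, (i < n)%nat -> (j < n)%nat -> H i j = Cconj (H j i).

Fixpoint mpow (n : nat) (A : Mat) (k : nat) : Mat :=
  match k with
  | O => mid
  | S m => mmul n (mpow n A m) A
  end.

Definition is_mexp (n : nat) (A E : Mat) : Prop :=
  forall i j, (i < n)%nat -> (j < n)%nat ->
    Un_cv (fun N => Re (Csum (S N) (fun k => Cmul (RtoC (/ INR (fact k))) (mpow n A k i j))))
          (Re (E i j)) /\
    Un_cv (fun N => Im (Csum (S N) (fun k => Cmul (RtoC (/ INR (fact k))) (mpow n A k i j))))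
          (Im (E i j)).

Definition has_deriv_on (a b : R) (f f' : R -> R) : Prop :=
  forall t, a <= t <= b ->
    forall eps, 0 < eps -> exists delta, 0 < delta /\
      forall u, a <= u <= b -> u <> t -> Rabs (u - t) < delta ->
        Rabs ((f u - f t) / (u - t) - f' t) < eps.

Definition C_has_deriv_on (a b : R) (f f' : R -> C) : Prop :=
  has_deriv_on a b (fun t => Re (f t)) (fun t => Re (f' t)) /\
  has_deriv_on a b (fun t => Im (f t)) (fun t => Im (f' t)).

Definition vec_has_deriv_on (n : nat) (a b : R) (v v' : R -> Vec) : Prop :=
  forall i, (i < n)%nat -> C_has_deriv_on a b (fun t => v t i) (fun t => v' t i).

Definition mat_has_deriv_on (n : nat) (a b : R) (A A' : R -> Mat) : Prop :=
  forall i j, (i < n)%nat -> (j < n)%nat ->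
    C_has_deriv_on a b (fun t => A t i j) (fun t => A' t i j).

Definition RInt_is (f : R -> R) (a b v : R) : Prop :=
  exists pr : Riemann_integrable f a b, RiemannInt pr = v.

Definition improper_int (f : R -> R) (v : R) : Prop :=
  forall eps, 0 < eps -> exists T, 0 < T /\
    forall a b, a <= - T -> T <= b ->
      exists w, RInt_is f a b w /\ Rabs (w - v) < eps.

Definition is_filter_function (Delta : R) (W : R -> R) : Prop :=
  (forall t, t <> 0 -> continuity_pt W t) /\
  W 0 = / 2 /\
  (forall eps, 0 < eps -> exists delta, 0 < delta /\
      forall t, 0 <= t < delta -> Rabs (W t - W 0) < eps) /\
  (forall t, Rabs (W t) <= / 2) /\
  (forall t, t <> 0 -> W (- t) = - W t) /\
  (exists K L, improper_int (fun t => Rabs (W t)) L /\ L <= K / Delta) /\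
  (exists c0 c1, 0 < c0 /\ 0 < c1 /\
      forall t, 2 <= Delta * Rabs t ->
        Rabs (W t) <= c1 * exp (- c0 * Delta * Rabs t / (ln (Delta * Rabs t)) ^ 2)) /\
  (* Fourier transform: int W(t) e^{i lambda t} dt = i / lambda for |lambda| >= Delta *)
  (forall lambda, Delta <= Rabs lambda ->
      improper_int (fun t => W t * cos (lambda * t)) 0 /\
      improper_int (fun t => W t * sin (lambda * t)) (/ lambda)).

(* S = S_Delta(H, A) = int W(t) e^{itH} A e^{-itH} dt  (entrywise) *)
Definition is_SDelta (n : nat) (W : R -> R) (H A S : Mat) : Prop :=
  exists E : R -> Mat,
    (forall t, is_mexp n (mscale (0, t) H) (E t)) /\
    forall i j, (i < n)%nat -> (j < n)%nat ->
      improper_int (fun t => W t * Re (mmul n (mmul n (E t) A) (E (- t)) i j)) (Re (S i j)) /\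
      improper_int (fun t => W t * Im (mmul n (mmul n (E t) A) (E (- t)) i j)) (Im (S i j)).

Definition unique_ground_state_with_gap (n : nat) (Delta : R) (H : Mat) (psi : Vec) : Prop :=
  exists E0 : R,
    vec_eq n (mvmul n H psi) (vscale (RtoC E0) psi) /\
    forall (E : C) (v : Vec), vec_nonzero n v ->
      vec_eq n (mvmul n H v) (vscale E v) ->
      (exists c : C, vec_eq n v (vscale c psi)) \/ E0 + Delta <= Re E.

(* Fix theta and expand H'(theta) Psi0 in an orthonormal eigenbasis
   (v_k, l_k) of H(theta) (spectral theorem).  With E0 the ground energy,
     e^{itH} H' e^{-itH} Psi0 = sum_k <v_k|H' Psi0> e^{it(l_k - E0)} v_k,
   so integrating against W replaces each factor e^{it(l_k - E0)} by the
   Fourier transform of W at l_k - E0.  By the gap condition every l_k is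
   either E0 (then v_k lies in the span of Psi0, hence <v_k|Psi0'> = 0 by
   parallel transport, and the constant term is killed by the oddness of W)
   or >= E0 + Delta (then the transform is i/(l_k - E0), and differentiating
   H Psi0 = E0 Psi0 gives <v_k|H' Psi0> = (E0 - l_k) <v_k|Psi0'>).  Summing,
     S_Delta(H, H') Psi0 = -i Psi0'.                      (key identity)
   Hence phi = Psi0 - U Psi0(0) solves phi' = i S phi with S self-adjoint,
   so |phi|^2 is constant on [0, s]; it vanishes at 0, so phi = 0. *)

From Pilot Require Import Defs.
From Stdlib Require Import Reals Arith Lra Lia.
From Coquelicot Require Import Rcomplements Hierarchy RInt.
From mathcomp Require all_boot all_algebra Rstruct complex spectral.
Import Pilot.Defs.
Open Scope R_scope.

Definition Csub (z w : C) : C := (Re z - Re w, Im z - Im w).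

Lemma Cext (z w : C) : Re z = Re w -> Im z = Im w -> z = w.
Proof. destruct z, w; unfold Re, Im; simpl; intros -> ->; reflexivity. Qed.

(* Identities of complex arithmetic reduce to two real ring identities. *)
Ltac cunf := unfold Csub, Cadd, Cmul, Cconj, C0, C1, Ci, RtoC, Re, Im in *; cbn [fst snd] in *.
Ltac cring := apply Cext; cunf; ring.

Lemma Csub_zero (x y : C) : Csub x y = C0 -> x = y.
Proof. intros E. apply Cext; cunf; injection E; lra. Qed.

Lemma Cmul_cancel_real (l : R) (w : C) : Cmul (RtoC l) w = C0 -> w <> C0 -> l = 0.
Proof.
  intros E Hw. destruct w as [a b]. cunf. injection E; intros E1 E2.
  destruct (Req_dec l 0) as [|Hl]; auto.
  exfalso. apply Hw. f_equal; apply (Rmult_eq_reg_l l); lra.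
Qed.

Lemma Csum_ext n (f g : nat -> C) :
  (forall k, (k < n)%nat -> f k = g k) -> Csum n f = Csum n g.
Proof.
  induction n; simpl; intros E; auto.
  rewrite IHn by (intros; apply E; lia). rewrite E by lia. reflexivity.
Qed.

Lemma Csum_add n (f g : nat -> C) :
  Csum n (fun k => Cadd (f k) (g k)) = Cadd (Csum n f) (Csum n g).
Proof. induction n; simpl; [cring | rewrite IHn; cring]. Qed.

Lemma Csum_sub n (f g : nat -> C) :
  Csum n (fun k => Csub (f k) (g k)) = Csub (Csum n f) (Csum n g).
Proof. induction n; simpl; [cring | rewrite IHn; cring]. Qed.

Lemma Csum_scal_l n c (f : nat -> C) : Csum n (fun k => Cmul c (f k)) = Cmul c (Csum n f).
Proof. induction n; simpl; [cring | rewrite IHn; cring]. Qed.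

Lemma Csum_scal_r n c (f : nat -> C) : Csum n (fun k => Cmul (f k) c) = Cmul (Csum n f) c.
Proof. induction n; simpl; [cring | rewrite IHn; cring]. Qed.

Lemma Csum_conj n (f : nat -> C) : Csum n (fun k => Cconj (f k)) = Cconj (Csum n f).
Proof. induction n; simpl; [cring | rewrite IHn; cring]. Qed.

Lemma Csum_zero n (f : nat -> C) : (forall k, (k < n)%nat -> f k = C0) -> Csum n f = C0.
Proof.
  induction n; simpl; intros E; [reflexivity |].
  rewrite IHn by (intros; apply E; lia). rewrite E by lia. cring.
Qed.

Lemma Csum_exch n m (f : nat -> nat -> C) :
  Csum n (fun i => Csum m (fun j => f i j)) = Csum m (fun j => Csum n (fun i => f i j)).
Proof.
  induction n; simpl.
  - symmetry; apply Csum_zero; auto.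
  - rewrite IHn, <- Csum_add. reflexivity.
Qed.

Lemma Csum_delta n j (f : nat -> C) : (j < n)%nat ->
  Csum n (fun k => if Nat.eqb j k then f k else C0) = f j.
Proof.
  induction n; intros Hj; simpl; [lia |].
  destruct (Nat.eq_dec j n) as [-> | Hjn].
  - rewrite Nat.eqb_refl, Csum_zero; [cring |].
    intros k Hk. destruct (Nat.eqb_spec n k); [lia | auto].
  - rewrite IHn by lia. destruct (Nat.eqb_spec j n); [lia | cring].
Qed.

Lemma mvmul_mmul n A B v i : mvmul n (mmul n A B) v i = mvmul n A (mvmul n B v) i.
Proof.
  unfold mvmul, mmul.
  transitivity (Csum n (fun k => Csum n (fun j => Cmul (A i j) (Cmul (B j k) (v k))))).
  - apply Csum_ext; intros k _. rewrite <- Csum_scal_r. apply Csum_ext; intros; cring.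
  - rewrite Csum_exch. apply Csum_ext; intros j _. rewrite <- Csum_scal_l. reflexivity.
Qed.

Lemma mvmul_vscale n A c v i : mvmul n A (vscale c v) i = Cmul c (mvmul n A v i).
Proof. unfold mvmul, vscale. rewrite <- Csum_scal_l. apply Csum_ext; intros; cring. Qed.

Lemma mvmul_sub n A v w i :
  mvmul n A (fun m => Csub (v m) (w m)) i = Csub (mvmul n A v i) (mvmul n A w i).
Proof. unfold mvmul. rewrite <- Csum_sub. apply Csum_ext; intros; cring. Qed.

Lemma mvmul_comb n A (c : nat -> C) (Vs : nat -> Vec) i :
  mvmul n A (fun m => Csum n (fun k => Cmul (c k) (Vs k m))) i =
  Csum n (fun k => Cmul (c k) (mvmul n A (Vs k) i)).
Proof.
  unfold mvmul.
  transitivity (Csum n (fun m => Csum n (fun k => Cmul (c k) (Cmul (A i m) (Vs k m))))).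
  - apply Csum_ext; intros. rewrite <- Csum_scal_l. apply Csum_ext; intros; cring.
  - rewrite Csum_exch. apply Csum_ext; intros. rewrite Csum_scal_l. reflexivity.
Qed.

Lemma mvmul_ext n A v w i : vec_eq n v w -> mvmul n A v i = mvmul n A w i.
Proof. intros E. unfold mvmul. apply Csum_ext; intros. rewrite E; auto. Qed.

Lemma mvmul_ext_m n A B v i : (i < n)%nat -> mat_eq n A B -> mvmul n A v i = mvmul n B v i.
Proof. intros Hi E. unfold mvmul. apply Csum_ext; intros. rewrite E; auto. Qed.

Lemma mvmul_mid n v i : (i < n)%nat -> mvmul n mid v i = v i.
Proof.
  intros Hi. unfold mvmul, mid. rewrite <- (Csum_delta n i v Hi).
  apply Csum_ext; intros k _. destruct (Nat.eqb i k); cring.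
Qed.

Lemma inner_ext n u u' v v' : vec_eq n u u' -> vec_eq n v v' -> inner n u v = inner n u' v'.
Proof. intros E1 E2. unfold inner. apply Csum_ext; intros. rewrite E1, E2; auto. Qed.

Lemma inner_scal_r n u c v : inner n u (vscale c v) = Cmul c (inner n u v).
Proof. unfold inner, vscale. rewrite <- Csum_scal_l. apply Csum_ext; intros; cring. Qed.

Lemma inner_scal_l n u c v : inner n (vscale c u) v = Cmul (Cconj c) (inner n u v).
Proof. unfold inner, vscale. rewrite <- Csum_scal_l. apply Csum_ext; intros; cring. Qed.

Lemma inner_add_r n u v w :
  inner n u (fun m => Cadd (v m) (w m)) = Cadd (inner n u v) (inner n u w).
Proof. unfold inner. rewrite <- Csum_add. apply Csum_ext; intros; cring. Qed.

Lemma inner_conj n u v : Cconj (inner n u v) = inner n v u.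
Proof. unfold inner. rewrite <- Csum_conj. apply Csum_ext; intros; cring. Qed.

Lemma herm_inner n H u v : self_adjoint n H ->
  inner n u (mvmul n H v) = inner n (mvmul n H u) v.
Proof.
  intros Hs. unfold inner, mvmul.
  transitivity (Csum n (fun i => Csum n (fun j => Cmul (Cmul (Cconj (u i)) (H i j)) (v j)))).
  - apply Csum_ext; intros i _. rewrite <- Csum_scal_l. apply Csum_ext; intros; cring.
  - rewrite Csum_exch. apply Csum_ext; intros j Hj. rewrite Csum_scal_r. f_equal.
    rewrite <- Csum_conj. apply Csum_ext; intros i Hi. rewrite (Hs i j) by auto. cring.
Qed.

Lemma inner_self_im n v : Im (inner n v v) = 0.
Proof. unfold inner. induction n; simpl; [reflexivity |]. cunf. rewrite IHn. ring. Qed.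

Lemma inner_vnorm n v : vnorm2 n v = 1 -> inner n v v = C1.
Proof. intros E. apply Cext; [apply E | rewrite inner_self_im; reflexivity]. Qed.

Lemma vec_nonzero_of_norm n v : inner n v v = C1 -> vec_nonzero n v.
Proof.
  intros E. destruct (Classical_Prop.classic (vec_nonzero n v)) as [Hv | Hv]; auto.
  exfalso. enough (inner n v v = C0) as E0 by (rewrite E in E0; injection E0; lra).
  unfold inner. apply Csum_zero. intros k Hk.
  destruct (Classical_Prop.classic (v k = C0)) as [-> | Hk0]; [cring |].
  exfalso; apply Hv; exists k; auto.
Qed.

Lemma inner_self_nonneg n v : 0 <= Re (inner n v v).
Proof.
  unfold inner. induction n; simpl; [cunf; lra |].
  cunf. destruct (v n) as [a b]; simpl. nra.
Qed.

Lemma inner_self_zero n v : Re (inner n v v) = 0 -> forall m, (m < n)%nat -> v m = C0.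
Proof.
  induction n as [|n IH]; intros E m Hm; [lia |].
  assert (Hprev := inner_self_nonneg n v).
  unfold inner in E, Hprev. simpl in E. unfold inner in IH.
  cunf. destruct (v n) as [a b] eqn:Evn; simpl in E.
  assert (Ha : a = 0) by nra. assert (Hb : b = 0) by nra.
  destruct (Nat.eq_dec m n) as [-> | Hmn].
  - rewrite Evn, Ha, Hb. reflexivity.
  - apply IH; [nra | lia].
Qed.

Lemma orthonormal_expansion n (V : nat -> Vec) u m :
  (forall i j, (i < n)%nat -> (j < n)%nat ->
     Csum n (fun k => Cmul (V k i) (Cconj (V k j))) = if Nat.eqb i j then C1 else C0) ->
  (m < n)%nat -> u m = Csum n (fun k => Cmul (inner n (V k) u) (V k m)).
Proof.
  intros Hc Hm. unfold inner.
  transitivity (Csum n (fun j => Cmul (u j) (Csum n (fun k => Cmul (V k m) (Cconj (V k j)))))).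
  - rewrite <- (Csum_delta n m u Hm). apply Csum_ext; intros j Hj. rewrite Hc by auto.
    destruct (Nat.eqb m j); cring.
  - transitivity (Csum n (fun j => Csum n (fun k => Cmul (Cmul (Cconj (V k j)) (u j)) (V k m)))).
    + apply Csum_ext; intros j _. rewrite <- Csum_scal_l. apply Csum_ext; intros; cring.
    + rewrite Csum_exch. apply Csum_ext; intros k _. rewrite Csum_scal_r. reflexivity.
Qed.

(** The spectral theorem, transported from MathComp's [spectral] library *)

(* MathComp's complex numbers [R[i]] over Stdlib's reals, and the dictionary
   with the pairs of [Defs]. *)
Module Spectral.
Import all_boot all_algebra Rstruct complex spectral.
Import GRing.Theory Num.Theory.
Local Open Scope ring_scope.
Local Open Scope complex_scope.
Local Open Scope sesquilinear_scope.
Definition RR := Rdefinitions.R.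

Lemma conjE (a b : RR) : ((Complex a b)^*)%R = Complex a (-b).
Proof.
rewrite [Complex a b]complexE /= rmorphD rmorphM /= conjCi.
have hr : forall x : RR, ((x%:C)^*)%R = x%:C.
  by move=> x; apply: conj_Creal; apply/complex_realP; exists x.
by rewrite !hr; apply/eqP; rewrite eq_complex /=; simpc.
Qed.

Definition toC (z : Defs.C) : RR[i] := Complex (fst z) (snd z).
Definition ofC (w : RR[i]) : Defs.C := (complex.Re w, complex.Im w).

Lemma toC_ofC w : toC (ofC w) = w. Proof. by case: w. Qed.
Lemma toC_inj z w : toC z = toC w -> z = w.
Proof. by case: z => a b; case: w => c d [-> ->]. Qed.
Lemma toC_add z w : toC (Cadd z w) = toC z + toC w.
Proof. by case: z => a b; case: w => c d. Qed.
Lemma toC_mul z w : toC (Cmul z w) = toC z * toC w.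
Proof. by case: z => a b; case: w => c d. Qed.
Lemma toC_conj z : toC (Cconj z) = ((toC z)^*)%R.
Proof. by case: z => a b; rewrite /toC conjE. Qed.
Lemma toC_sum n f : toC (Csum n f) = \sum_(i < n) toC (f i).
Proof.
elim: n => [|n IH]; first by rewrite big_ord0.
by rewrite big_ord_recr /= toC_add IH.
Qed.

Lemma inord_eqb m (k l : nat) : (k < m.+1)%N -> (l < m.+1)%N ->
  ((inord l : 'I_m.+1) == inord k) = Nat.eqb k l.
Proof.
move=> hk hl; apply/idP/idP.
- by move/eqP/(congr1 val); rewrite /= !inordK // => ->; exact/Nat.eqb_refl.
- by move/Nat.eqb_spec => ->.
Qed.

(* A self-adjoint matrix is diagonalised by a unitary matrix: its rows [V k]
   form an orthonormal eigenbasis, complete in the sense of the last clause. *)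
Lemma unitary_eigenbasis n (H : Mat) : self_adjoint n H ->
  exists (V : nat -> Vec) (lam : nat -> Defs.C),
  (forall k, lt k n -> vec_eq n (mvmul n H (V k)) (vscale (lam k) (V k))) /\
  (forall k l, lt k n -> lt l n -> inner n (V k) (V l) = if Nat.eqb k l then C1 else C0) /\
  (forall i j, lt i n -> lt j n ->
     Csum n (fun k => Cmul (V k i) (Cconj (V k j))) = if Nat.eqb i j then C1 else C0).
Proof.
case: n => [|m] hH.
  by exists (fun _ _ => C0), (fun _ => C0); split; [|split]; intros; exfalso; lia.
pose A : 'M[RR[i]]_(m.+1) := \matrix_(i, j) toC (H j i).
have hA : A^t* = A.
  apply/matrixP => i j; rewrite !mxE -toC_conj.
  by congr toC; symmetry; apply: hH; apply/ltP.
have An : A \is normalmx by apply/normalmxP; rewrite hA.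
have hD := @orthomx_spectralP _ _ A; rewrite An in hD.
move/elimT: hD => /(_ isT) hD.
set P := spectralmx A in hD; set d := spectral_diag A in hD.
have Pu : P \is unitarymx by exact: spectral_unitarymx.
have PPt : P *m P^t* = 1%:M by apply/unitarymxP.
have PtP : P^t* *m P = 1%:M by rewrite -invmx_unitary // mulVmx // unitarymx_unit.
have PA : P *m A = diag_mx d *m P.
  by rewrite {1}hD !mulmxA mulmxV ?mul1mx // unitarymx_unit.
exists (fun k i => ofC (P (inord k) (inord i))), (fun k => ofC (d 0 (inord k))).
split; [|split].
- move=> k /ltP hk i /ltP hi; apply: toC_inj.
  rewrite /mvmul /vscale toC_sum toC_mul !toC_ofC.
  have := PA; move/matrixP => /(_ (inord k) (inord i)).
  rewrite /= mul_diag_mx !mxE => <-.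
  apply: eq_bigr => j _; rewrite toC_mul toC_ofC mxE mulrC inord_val.
  by rewrite inordK.
- move=> k l /ltP hk /ltP hl; apply: toC_inj.
  rewrite /inner toC_sum.
  have := PPt; move/matrixP => /(_ (inord l) (inord k)).
  rewrite /= !mxE inord_eqb // => E.
  transitivity (\sum_(j < m.+1) P (inord l) j * ((P^t*) j (inord k))).
    by apply: eq_bigr => j _; rewrite toC_mul toC_conj !toC_ofC !mxE inord_val mulrC.
  by rewrite E; case: (Nat.eqb k l).
- move=> i j /ltP hi /ltP hj; apply: toC_inj.
  rewrite toC_sum.
  have := PtP; move/matrixP => /(_ (inord j) (inord i)).
  rewrite /= !mxE inord_eqb // => E.
  transitivity (\sum_(k < m.+1) (P^t*) (inord j) k * P k (inord i)).
    by apply: eq_bigr => k _; rewrite toC_mul toC_conj !toC_ofC !mxE inord_val mulrC.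
  by rewrite E; case: (Nat.eqb i j).
Qed.
End Spectral.

(* The spectral theorem with real eigenvalues: the eigenvalue of a unit
   eigenvector [v] is the real number <v|Hv>. *)
Lemma self_adjoint_eigenbasis n (H : Mat) : self_adjoint n H ->
  exists (V : nat -> Vec) (l : nat -> R),
  (forall k, (k < n)%nat -> vec_eq n (mvmul n H (V k)) (vscale (RtoC (l k)) (V k))) /\
  (forall k m, (k < n)%nat -> (m < n)%nat -> inner n (V k) (V m) = if Nat.eqb k m then C1 else C0) /\
  (forall i j, (i < n)%nat -> (j < n)%nat ->
     Csum n (fun k => Cmul (V k i) (Cconj (V k j))) = if Nat.eqb i j then C1 else C0).
Proof.
  intros Hs. destruct (Spectral.unitary_eigenbasis n H Hs) as [V [lam [He [Ho Hc]]]].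
  exists V, (fun k => Re (lam k)). split; [| split]; auto.
  intros k Hk.
  assert (Hexp : inner n (V k) (mvmul n H (V k)) = lam k).
  { rewrite (inner_ext n (V k) (V k) _ (vscale (lam k) (V k))); [| intros ?; auto | apply He; auto].
    rewrite inner_scal_r, Ho, Nat.eqb_refl by auto. cring. }
  assert (Hreal : Cconj (lam k) = lam k).
  { rewrite <- Hexp, inner_conj. symmetry. apply herm_inner; auto. }
  assert (Elam : lam k = RtoC (Re (lam k))).
  { apply Cext; [reflexivity |]. apply (f_equal Im) in Hreal. cunf. lra. }
  intros i Hi. rewrite He by auto. unfold vscale. rewrite <- Elam. reflexivity.
Qed.

(** The complex exponential e^{ix} and its power series *)

Definition cexp (x : R) : C := (cos x, sin x).

Lemma cexp_add x y : Cmul (cexp x) (cexp y) = cexp (x + y).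
Proof. unfold cexp. rewrite cos_plus, sin_plus. cring. Qed.

Lemma cexp_opp x : cexp (- x) = Cconj (cexp x).
Proof. unfold cexp. rewrite cos_neg, sin_neg. cring. Qed.

Lemma cexp_0 : cexp 0 = C1.
Proof. unfold cexp. rewrite cos_0, sin_0. reflexivity. Qed.

Fixpoint cpow (z : C) (m : nat) : C :=
  match m with O => C1 | S k => Cmul (cpow z k) z end.

Definition eterm (z : C) (k : nat) : C := Cmul (RtoC (/ INR (fact k))) (cpow z k).
Definition esum (z : C) (N : nat) : C := Csum (S N) (eterm z).

Lemma esum_S z N : esum z (S N) = Cadd (esum z N) (eterm z (S N)).
Proof. reflexivity. Qed.

(* Partial sums of Stdlib's power series for cos and sin(x)/x. *)
Definition cos_partial x M := sum_f_R0 (fun i => cos_n i * (x * x) ^ i) M.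
Definition sin_partial x M := sum_f_R0 (fun i => sin_n i * (x * x) ^ i) M.

Lemma cpow_S z m : cpow z (S m) = Cmul (cpow z m) z. Proof. reflexivity. Qed.
Lemma powS x m : x ^ (S m) = x * x ^ m. Proof. reflexivity. Qed.

Lemma Re_pair a b : Re (a, b) = a. Proof. reflexivity. Qed.
Lemma Im_pair a b : Im (a, b) = b. Proof. reflexivity. Qed.

Lemma pow_sq x k : (x * x) ^ k = x ^ (2 * k).
Proof.
  induction k; [reflexivity |].
  replace (2 * S k)%nat with (2 * k + 2)%nat by lia. rewrite pow_add, <- IHk. simpl. ring.
Qed.

Lemma cpow_imag x m : cpow (0, x) (2 * m) = ((-1) ^ m * x ^ (2 * m), 0) /\
                      cpow (0, x) (2 * m + 1) = (0, (-1) ^ m * x ^ (2 * m + 1)).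
Proof.
  induction m as [|m [E1 E2]]; [split; simpl; cring |].
  replace (2 * S m + 1)%nat with (S (S (2 * m + 1))) by lia.
  replace (2 * S m)%nat with (S (2 * m + 1)) by lia.
  rewrite !cpow_S, E2, !powS. split; cring.
Qed.

Lemma esum_re x M :
  Re (esum (0, x) (2 * M)) = cos_partial x M /\ Re (esum (0, x) (2 * M + 1)) = cos_partial x M.
Proof.
  induction M as [|M [_ IH]].
  - unfold esum, eterm, cos_partial, cos_n. simpl. cunf. split; field.
  - assert (E1 : (2 * S M = S (2 * M + 1))%nat) by lia.
    assert (Heven : Re (esum (0, x) (2 * S M)) = cos_partial x (S M)).
    { rewrite E1. rewrite esum_S.
      unfold Cadd at 1. rewrite Re_pair, IH.
      unfold cos_partial. simpl sum_f_R0. fold (cos_partial x M). f_equal.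
      unfold eterm. rewrite <- E1. rewrite (proj1 (cpow_imag x (S M))).
      unfold cos_n. rewrite <- pow_sq. cunf. simpl pow. field. apply not_0_INR, fact_neq_0. }
    split; [exact Heven |].
    replace (2 * S M + 1)%nat with (S (2 * S M)) by lia.
    rewrite esum_S.
    unfold Cadd at 1. rewrite Re_pair, Heven.
    replace (S (2 * S M)) with (2 * S M + 1)%nat by lia.
    unfold eterm. rewrite (proj2 (cpow_imag x (S M))). cunf. ring.
Qed.

Lemma esum_im x M :
  Im (esum (0, x) (2 * M + 1)) = x * sin_partial x M /\
  Im (esum (0, x) (2 * M + 2)) = x * sin_partial x M.
Proof.
  induction M as [|M [_ IH]].
  - unfold esum, eterm, sin_partial, sin_n. simpl. cunf. split; field.
  - assert (E1 : (2 * S M + 1 = S (2 * M + 2))%nat) by lia.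
    assert (Hodd : Im (esum (0, x) (2 * S M + 1)) = x * sin_partial x (S M)).
    { rewrite E1. rewrite esum_S.
      unfold Cadd at 1. rewrite Im_pair, IH.
      unfold sin_partial. simpl sum_f_R0. fold (sin_partial x M).
      unfold eterm. rewrite <- E1. rewrite (proj2 (cpow_imag x (S M))).
      unfold sin_n.
      replace (x ^ (2 * S M + 1)) with (x * (x * x * (x * x) ^ M))
        by (rewrite pow_sq, pow_add; replace (2 * S M)%nat with (S (S (2 * M))) by lia;
            simpl; ring).
      replace (2 * S M + 1)%nat with (S (2 * S M)) by lia.
      cunf. field. apply not_0_INR, fact_neq_0. }
    split; [exact Hodd |].
    replace (2 * S M + 2)%nat with (S (2 * S M + 1)) by lia.
    rewrite esum_S.
    unfold Cadd at 1. rewrite Im_pair, Hodd.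
    replace (S (2 * S M + 1)) with (2 * S (S M))%nat by lia.
    unfold eterm. rewrite (proj1 (cpow_imag x (S (S M)))). cunf. ring.
Qed.

Lemma Un_cv_interleave (u c : nat -> R) L :
  (forall M, u (2 * M)%nat = c M /\ u (2 * M + 1)%nat = c M) -> Un_cv c L -> Un_cv u L.
Proof.
  intros Hu Hc eps Heps. destruct (Hc eps Heps) as [N0 HN].
  exists (2 * N0)%nat. intros N HN0.
  destruct (Nat.Even_or_Odd N) as [[m ->] | [m ->]].
  - rewrite (proj1 (Hu m)). apply HN. lia.
  - rewrite (proj2 (Hu m)). apply HN. lia.
Qed.

Lemma Un_cv_shift (u : nat -> R) L : Un_cv (fun N => u (S N)) L -> Un_cv u L.
Proof.
  intros Hu eps Heps. destruct (Hu eps Heps) as [N0 HN]. exists (S N0). intros N HN0.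
  destruct N; [lia | apply HN; lia].
Qed.

Lemma Un_cv_const (c : R) : Un_cv (fun _ => c) c.
Proof. intros eps Heps. exists O. intros. unfold Rdist. rewrite Rminus_diag_eq, Rabs_R0; auto. Qed.

Lemma Un_cv_ext (u v : nat -> R) L : (forall N, u N = v N) -> Un_cv u L -> Un_cv v L.
Proof. intros E Hu eps He. destruct (Hu eps He) as [N HN]. exists N. intros. rewrite <- E. auto. Qed.

Definition Ccv (a : nat -> C) (L : C) :=
  Un_cv (fun N => Re (a N)) (Re L) /\ Un_cv (fun N => Im (a N)) (Im L).

Lemma Ccv_ext a b L : (forall N, a N = b N) -> Ccv a L -> Ccv b L.
Proof. intros E [H1 H2]. split; eapply Un_cv_ext; eauto; intros; simpl; rewrite E; auto. Qed.

Lemma Ccv_const c : Ccv (fun _ => c) c.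
Proof. split; apply Un_cv_const. Qed.

Lemma Ccv_add a b A B : Ccv a A -> Ccv b B -> Ccv (fun N => Cadd (a N) (b N)) (Cadd A B).
Proof. intros [H1 H2] [H3 H4]; split; apply CV_plus; auto. Qed.

Lemma Ccv_mul a b A B : Ccv a A -> Ccv b B -> Ccv (fun N => Cmul (a N) (b N)) (Cmul A B).
Proof.
  intros [H1 H2] [H3 H4]; split.
  - apply CV_minus; apply CV_mult; auto.
  - apply CV_plus; apply CV_mult; auto.
Qed.

Lemma Ccv_Csum n (a : nat -> nat -> C) (A : nat -> C) :
  (forall k, (k < n)%nat -> Ccv (fun N => a N k) (A k)) ->
  Ccv (fun N => Csum n (a N)) (Csum n A).
Proof.
  induction n; intros Ha; simpl; [apply Ccv_const |].
  apply Ccv_add; [apply IHn; intros; apply Ha; lia | apply Ha; lia].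
Qed.

Lemma Ccv_unique a A B : Ccv a A -> Ccv a B -> A = B.
Proof. intros [H1 H2] [H3 H4]. apply Cext; eapply UL_sequence; eauto. Qed.

Lemma esum_cv x : Ccv (esum (0, x)) (cexp x).
Proof.
  split.
  - apply Un_cv_interleave with (c := cos_partial x); [apply esum_re |].
    change (Re (cexp x)) with (cos x). unfold cos. destruct (exist_cos (Rsqr x)) as [l Hl]. exact Hl.
  - apply Un_cv_shift, Un_cv_interleave with (c := fun M => x * sin_partial x M).
    + intros M. replace (S (2 * M)) with (2 * M + 1)%nat by lia.
      replace (S (2 * M + 1)) with (2 * M + 2)%nat by lia. apply esum_im.
    + change (Im (cexp x)) with (sin x). unfold sin. destruct (exist_sin (Rsqr x)) as [l Hl].
      apply (CV_mult (fun _ => x) (sin_partial x) x l); [apply Un_cv_const | exact Hl].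
Qed.

Lemma mpow_eigvec n A v mu :
  (forall i, (i < n)%nat -> mvmul n A v i = Cmul mu (v i)) ->
  forall m i, (i < n)%nat -> mvmul n (mpow n A m) v i = Cmul (cpow mu m) (v i).
Proof.
  intros HA m. induction m; intros i Hi; simpl.
  - rewrite mvmul_mid by auto. cring.
  - rewrite mvmul_mmul, (mvmul_ext n (mpow n A m) (mvmul n A v) (vscale mu v)).
    + rewrite mvmul_vscale, IHm by auto. cring.
    + intros j Hj. rewrite HA by auto. reflexivity.
Qed.

Lemma mexp_eigvec n H E t v l :
  is_mexp n (mscale (0, t) H) E ->
  (forall i, (i < n)%nat -> mvmul n H v i = Cmul (RtoC l) (v i)) ->
  forall i, (i < n)%nat -> mvmul n E v i = Cmul (cexp (t * l)) (v i).
Proof.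
  intros HE Hv i Hi.
  set (A := mscale (0, t) H).
  assert (HA : forall i, (i < n)%nat -> mvmul n A v i = Cmul (0, t * l) (v i)).
  { intros i' Hi'. transitivity (Cmul (0, t) (mvmul n H v i')).
    - unfold A, mvmul, mscale. rewrite <- Csum_scal_l. apply Csum_ext; intros; cring.
    - rewrite Hv by auto. cring. }
  (* the partial sums of the series for exp(itH) v, in two ways *)
  set (partial := fun N => Csum n (fun j =>
         Cmul (Csum (S N) (fun k => Cmul (RtoC (/ INR (fact k))) (mpow n A k i j))) (v j))).
  assert (Hcv_E : Ccv partial (mvmul n E v i)).
  { unfold partial, mvmul. apply Ccv_Csum. intros j Hj. apply Ccv_mul; [| apply Ccv_const].
    exact (HE i j Hi Hj). }
  assert (Hcv_scalar : Ccv partial (Cmul (cexp (t * l)) (v i))).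
  { eapply Ccv_ext; [| apply Ccv_mul; [apply esum_cv | apply Ccv_const]].
    intros N. unfold partial, esum.
    transitivity (Csum (S N) (fun k => Cmul (RtoC (/ INR (fact k))) (mvmul n (mpow n A k) v i))).
    - rewrite <- Csum_scal_r. apply Csum_ext; intros k _.
      rewrite (mpow_eigvec n A v (0, t * l) HA k i Hi). unfold eterm. cring.
    - unfold mvmul.
      transitivity (Csum (S N) (fun k => Csum n (fun j =>
                      Cmul (Cmul (RtoC (/ INR (fact k))) (mpow n A k i j)) (v j)))).
      + apply Csum_ext; intros k _. rewrite <- Csum_scal_l. apply Csum_ext; intros; cring.
      + rewrite Csum_exch. apply Csum_ext; intros j _. rewrite Csum_scal_r. reflexivity. }
  eapply Ccv_unique; eauto.
Qed.

Lemma mexp_spectral n (H : Mat) (V : nat -> Vec) (l : nat -> R) E t :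
  (forall k, (k < n)%nat -> vec_eq n (mvmul n H (V k)) (vscale (RtoC (l k)) (V k))) ->
  (forall i j, (i < n)%nat -> (j < n)%nat ->
     Csum n (fun k => Cmul (V k i) (Cconj (V k j))) = if Nat.eqb i j then C1 else C0) ->
  is_mexp n (mscale (0, t) H) E ->
  forall i j, (i < n)%nat -> (j < n)%nat ->
    E i j = Csum n (fun k => Cmul (cexp (t * l k)) (Cmul (V k i) (Cconj (V k j)))).
Proof.
  intros He Hc HE i j Hi Hj.
  set (ej := fun m : nat => if Nat.eqb m j then C1 else C0).
  assert (Ecol : E i j = mvmul n E ej i).
  { unfold mvmul, ej. rewrite <- (Csum_delta n j (E i) Hj). apply Csum_ext; intros k _.
    destruct (Nat.eqb_spec j k), (Nat.eqb_spec k j); try lia; cring. }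
  rewrite Ecol, (mvmul_ext n E ej (fun m => Csum n (fun k => Cmul (Cconj (V k j)) (V k m)))).
  - rewrite mvmul_comb. apply Csum_ext; intros k Hk.
    rewrite (mexp_eigvec n H E t (V k) (l k) HE) by (auto; intros; apply He; auto). cring.
  - intros m Hm. unfold ej. rewrite <- Hc by auto. apply Csum_ext; intros; cring.
Qed.

Lemma mexp_adjoint n (H : Mat) (E : R -> Mat) t :
  self_adjoint n H -> (forall t, is_mexp n (mscale (0, t) H) (E t)) ->
  forall i j, (i < n)%nat -> (j < n)%nat -> Cconj (E t i j) = E (- t) j i.
Proof.
  intros Hs HE i j Hi Hj.
  destruct (self_adjoint_eigenbasis n H Hs) as [V [l [He [_ Hc]]]].
  rewrite (mexp_spectral n H V l (E t) t He Hc (HE t)) by auto.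
  rewrite (mexp_spectral n H V l (E (-t)) (-t) He Hc (HE (-t))) by auto.
  rewrite <- Csum_conj. apply Csum_ext; intros k Hk.
  replace (- t * l k) with (- (t * l k)) by ring. rewrite cexp_opp. cring.
Qed.

(** Improper integrals over the real line *)

Lemma RInt_is_iff f a b w : RInt_is f a b w <-> is_RInt f a b w.
Proof.
  split.
  - intros [pr <-]. apply ex_RInt_Reals_aux_1.
  - intros Hf. assert (pr := ex_RInt_Reals_0 f a b (ex_intro _ w Hf)). exists pr.
    rewrite <- (RInt_Reals f a b pr). apply is_RInt_unique. auto.
Qed.

Lemma is_RInt_uniq (f : R -> R) a b (w1 w2 : R) :
  @is_RInt R_NormedModule f a b w1 -> @is_RInt R_NormedModule f a b w2 -> w1 = w2.
Proof.
  intros H1 H2. apply RInt_is_iff in H1 as [p1 <-]. apply RInt_is_iff in H2 as [p2 <-].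
  apply RiemannInt_P5.
Qed.

Lemma small_zero x : (forall eps, 0 < eps -> Rabs x < eps) -> x = 0.
Proof.
  intros Hx. destruct (Req_dec x 0) as [| Hx0]; auto. exfalso.
  assert (Hpos : 0 < Rabs x) by (apply Rabs_pos_lt; auto). specialize (Hx _ Hpos). lra.
Qed.

Lemma improper_ext f g v : (forall t, f t = g t) -> improper_int f v -> improper_int g v.
Proof.
  intros E Hf eps Heps. destruct (Hf eps Heps) as [T [HT HI]]. exists T; split; auto.
  intros a b Ha Hb. destruct (HI a b Ha Hb) as [w [Iw Ew]]. exists w; split; auto.
  apply RInt_is_iff. apply RInt_is_iff in Iw. eapply is_RInt_ext; [| apply Iw]. auto.
Qed.

Lemma improper_plus f g v w : improper_int f v -> improper_int g w ->
  improper_int (fun t => f t + g t) (v + w).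
Proof.
  intros Hf Hg eps Heps.
  destruct (Hf (eps / 2) ltac:(lra)) as [T1 [HT1 H1]].
  destruct (Hg (eps / 2) ltac:(lra)) as [T2 [HT2 H2]].
  assert (Hm1 := Rmax_l T1 T2). assert (Hm2 := Rmax_r T1 T2).
  exists (Rmax T1 T2). split; [lra |]. intros a b Ha Hb.
  destruct (H1 a b) as [w1 [I1 E1]]; try lra.
  destruct (H2 a b) as [w2 [I2 E2]]; try lra.
  exists (w1 + w2). split.
  - apply RInt_is_iff. apply RInt_is_iff in I1. apply RInt_is_iff in I2.
    apply (is_RInt_plus _ _ _ _ _ _ I1 I2).
  - replace (w1 + w2 - (v + w)) with ((w1 - v) + (w2 - w)) by ring.
    eapply Rle_lt_trans; [apply Rabs_triang | lra].
Qed.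

Lemma improper_scal c f v : improper_int f v -> improper_int (fun t => c * f t) (c * v).
Proof.
  intros Hf eps Heps. assert (Hc := Rabs_pos c).
  destruct (Hf (eps / (Rabs c + 1))) as [T [HT HI]].
  { apply Rdiv_lt_0_compat; lra. }
  exists T. split; auto. intros a b Ha Hb.
  destruct (HI a b Ha Hb) as [w [Iw Ew]].
  exists (c * w). split.
  - apply RInt_is_iff. apply RInt_is_iff in Iw. apply (is_RInt_scal _ _ _ c _ Iw).
  - replace (c * w - c * v) with (c * (w - v)) by ring. rewrite Rabs_mult.
    assert (Rabs c * Rabs (w - v) <= Rabs c * (eps / (Rabs c + 1)))
      by (apply Rmult_le_compat_l; lra).
    assert (Rabs c * (eps / (Rabs c + 1)) < eps).
    { apply (Rmult_lt_reg_r (Rabs c + 1)); [lra |].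
      unfold Rdiv. rewrite Rmult_assoc, Rmult_assoc, Rinv_l by lra. nra. }
    lra.
Qed.

Lemma improper_comb f g h a b v w u :
  improper_int f v -> improper_int g w ->
  (forall t, h t = a * f t + b * g t) -> u = a * v + b * w -> improper_int h u.
Proof.
  intros Hf Hg Eh ->. eapply improper_ext; [intros t; symmetry; apply Eh |].
  apply improper_plus; apply improper_scal; assumption.
Qed.

Lemma improper_zero : improper_int (fun _ => 0) 0.
Proof.
  intros eps Heps. exists 1. split; [lra |]. intros a b Ha Hb. exists 0. split.
  - apply RInt_is_iff. assert (I0 := is_RInt_const a b 0).
    change (is_RInt (fun _ => 0) a b ((b - a) * 0)) in I0. rewrite Rmult_0_r in I0. exact I0.
  - rewrite Rminus_0_r, Rabs_R0; auto.
Qed.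

Lemma improper_unique f v w : improper_int f v -> improper_int f w -> v = w.
Proof.
  intros Hv Hw. apply Rminus_diag_uniq, small_zero. intros eps Heps.
  destruct (Hv (eps / 2) ltac:(lra)) as [T1 [HT1 H1]].
  destruct (Hw (eps / 2) ltac:(lra)) as [T2 [HT2 H2]].
  assert (Hm1 := Rmax_l T1 T2). assert (Hm2 := Rmax_r T1 T2).
  destruct (H1 (- Rmax T1 T2) (Rmax T1 T2)) as [w1 [I1 E1]]; try lra.
  destruct (H2 (- Rmax T1 T2) (Rmax T1 T2)) as [w2 [I2 E2]]; try lra.
  apply RInt_is_iff in I1. apply RInt_is_iff in I2.
  assert (w1 = w2) as <- by (eapply is_RInt_uniq; eauto).
  replace (v - w) with (- (w1 - v) + (w1 - w)) by ring.
  eapply Rle_lt_trans; [apply Rabs_triang | rewrite Rabs_Ropp; lra].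
Qed.

Lemma odd_RInt f T w : 0 < T -> (forall t, t <> 0 -> f (- t) = - f t) ->
  is_RInt f (- T) T w -> w = 0.
Proof.
  intros HT Hodd Hw.
  destruct (ex_RInt_Chasles_1 f (- T) 0 T ltac:(lra) (ex_intro _ w Hw)) as [l1 I1].
  destruct (ex_RInt_Chasles_2 f (- T) 0 T ltac:(lra) (ex_intro _ w Hw)) as [l2 I2].
  assert (Ew : w = l1 + l2)
    by (apply (is_RInt_uniq f (- T) T); auto; exact (is_RInt_Chasles f _ _ _ _ _ I1 I2)).
  assert (Ineg : is_RInt f (- 0) (- T) (opp l1)) by (rewrite Ropp_0; apply is_RInt_swap; auto).
  assert (Irefl : is_RInt f 0 T (opp l1)).
  { eapply is_RInt_ext; [| apply (is_RInt_comp_opp f 0 T _ Ineg)]. intros x Hx.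
    rewrite Rmin_left in Hx by lra. rewrite Rmax_right in Hx by lra.
    change (- f (- x) = f x). rewrite Hodd by lra. ring. }
  assert (E2 : l2 = opp l1) by (apply (is_RInt_uniq f 0 T); auto).
  rewrite Ew, E2. unfold opp; simpl. ring.
Qed.

Lemma odd_improper f v : (forall t, t <> 0 -> f (- t) = - f t) -> improper_int f v -> v = 0.
Proof.
  intros Hodd Hf. apply small_zero. intros eps Heps.
  destruct (Hf eps Heps) as [T [HT HI]].
  destruct (HI (- T) T) as [w [Iw Ew]]; try lra.
  apply RInt_is_iff, odd_RInt in Iw; auto. subst w.
  replace v with (- (0 - v)) by ring. rewrite Rabs_Ropp. auto.
Qed.

Definition Wint (W : R -> R) (g : R -> C) (v : C) :=
  improper_int (fun t => W t * Re (g t)) (Re v) /\ improper_int (fun t => W t * Im (g t)) (Im v).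

Lemma Wint_ext W g h v : (forall t, g t = h t) -> Wint W g v -> Wint W h v.
Proof. intros E [H1 H2]; split; eapply improper_ext; eauto; intros; simpl; rewrite E; auto. Qed.

Lemma Wint_ext_v W g v w : v = w -> Wint W g v -> Wint W g w.
Proof. intros ->; auto. Qed.

Lemma Wint_zero W : Wint W (fun _ => C0) C0.
Proof. split; eapply improper_ext; try apply improper_zero; intros; cunf; ring. Qed.

Lemma Wint_add W g h v w :
  Wint W g v -> Wint W h w -> Wint W (fun t => Cadd (g t) (h t)) (Cadd v w).
Proof.
  intros [H1 H2] [H3 H4]; split.
  - apply (improper_comb _ _ _ 1 1 _ _ _ H1 H3); intros; cunf; ring.
  - apply (improper_comb _ _ _ 1 1 _ _ _ H2 H4); intros; cunf; ring.
Qed.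

Lemma Wint_scal W c g v : Wint W g v -> Wint W (fun t => Cmul c (g t)) (Cmul c v).
Proof.
  intros [H1 H2]; split.
  - eapply (improper_comb _ _ _ (Re c) (- Im c) _ _ _ H1 H2); intros; cunf; ring.
  - eapply (improper_comb _ _ _ (Re c) (Im c) _ _ _ H2 H1); intros; cunf; ring.
Qed.

Lemma Wint_sub W g h v w :
  Wint W g v -> Wint W h w -> Wint W (fun t => Csub (g t) (h t)) (Csub v w).
Proof.
  intros Hg Hh. eapply Wint_ext; [| eapply Wint_ext_v;
    [| apply (Wint_add _ _ _ _ _ Hg (Wint_scal W (-1, 0) _ _ Hh))]]; intros; cring.
Qed.

Lemma Wint_Csum W n (g : nat -> R -> C) (v : nat -> C) :
  (forall k, (k < n)%nat -> Wint W (g k) (v k)) ->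
  Wint W (fun t => Csum n (fun k => g k t)) (Csum n v).
Proof.
  induction n; intros Hg; simpl; [apply Wint_zero |].
  apply Wint_add; [apply IHn; intros; apply Hg; lia | apply Hg; lia].
Qed.

Lemma Wint_const W c v : (forall t, t <> 0 -> W (- t) = - W t) ->
  Wint W (fun _ => c) v -> v = C0.
Proof.
  intros Hodd [H1 H2]. apply Cext; unfold C0, Re, Im; simpl.
  - apply (odd_improper (fun t => W t * Re c)); auto. intros t Ht. rewrite Hodd by auto; ring.
  - apply (odd_improper (fun t => W t * Im c)); auto. intros t Ht. rewrite Hodd by auto; ring.
Qed.

Lemma Wint_fourier W Delta b mu : is_filter_function Delta W -> 0 < Delta -> Delta <= mu ->
  Wint W (fun t => Cmul b (cexp (t * mu))) (Cmul b (0, / mu)).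
Proof.
  intros HW HD Hmu.
  destruct HW as [_ [_ [_ [_ [_ [_ [_ HF]]]]]]].
  destruct (HF mu) as [Hcos Hsin]; [rewrite Rabs_right; lra |].
  split.
  - eapply (improper_comb _ _ _ (Re b) (- Im b) _ _ _ Hcos Hsin);
      [intros t; unfold cexp; rewrite (Rmult_comm t mu) | ]; cunf; ring.
  - eapply (improper_comb _ _ _ (Re b) (Im b) _ _ _ Hsin Hcos);
      [intros t; unfold cexp; rewrite (Rmult_comm t mu) | ]; cunf; ring.
Qed.

Lemma heisenberg_self_adjoint n (H A : Mat) (E : R -> Mat) t :
  self_adjoint n H -> self_adjoint n A -> (forall t, is_mexp n (mscale (0, t) H) (E t)) ->
  forall i j, (i < n)%nat -> (j < n)%nat ->
    Cconj (mmul n (mmul n (E t) A) (E (- t)) i j) = mmul n (mmul n (E t) A) (E (- t)) j i.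
Proof.
  intros Hs HA HE i j Hi Hj. unfold mmul. rewrite <- Csum_conj.
  transitivity (Csum n (fun l => Csum n (fun k => Cmul (Cmul (E t j l) (A l k)) (E (- t) k i)))).
  - apply Csum_ext; intros l Hl. rewrite <- Csum_scal_r, <- Csum_conj.
    apply Csum_ext; intros k Hk.
    transitivity (Cmul (Cmul (Cconj (E t i k)) (Cconj (A k l))) (Cconj (E (- t) l j))); [cring |].
    rewrite (mexp_adjoint n H E t Hs HE i k), (mexp_adjoint n H E (- t) Hs HE l j) by auto.
    rewrite Ropp_involutive, <- (HA l k) by auto. cring.
  - rewrite Csum_exch. apply Csum_ext; intros k Hk. rewrite Csum_scal_r. reflexivity.
Qed.

(* Integrating a self-adjoint family against the real weight W gives a
   self-adjoint matrix. *)
Lemma SDelta_self_adjoint n W (H A S : Mat) :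
  self_adjoint n H -> self_adjoint n A -> is_SDelta n W H A S -> self_adjoint n S.
Proof.
  intros Hs HA [E [HE HI]] i j Hi Hj.
  destruct (HI i j Hi Hj) as [R1 I1]. destruct (HI j i Hj Hi) as [R2 I2].
  assert (Hconj := fun t => heisenberg_self_adjoint n H A E t Hs HA HE i j Hi Hj).
  apply Cext; [change (Re (S i j) = Re (S j i)) | change (Im (S i j) = - Im (S j i))].
  - eapply improper_unique; [apply R1 |]. eapply improper_ext; [| apply R2].
    intros t; cbv beta. rewrite <- Hconj. reflexivity.
  - eapply improper_unique; [apply I1 |].
    eapply (improper_comb _ _ _ (-1) 0 _ _ _ I2 improper_zero).
    + intros t; cbv beta. rewrite <- Hconj. unfold Cconj, Im; simpl. ring.
    + ring.
Qed.

Definition punctured (s t : R) : R -> Prop := fun u => 0 <= u <= s /\ u <> t.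

Definition Clim s (f : R -> C) t (L : C) :=
  limit1_in (fun u => Re (f u)) (punctured s t) (Re L) t /\
  limit1_in (fun u => Im (f u)) (punctured s t) (Im L) t.

Definition Cderiv s (f f' : R -> C) t :=
  Clim s (fun u => Cmul (RtoC (/ (u - t))) (Csub (f u) (f t))) t (f' t).

Lemma limit1_in_ext (f g : R -> R) D l x :
  (forall u, D u -> f u = g u) -> limit1_in f D l x -> limit1_in g D l x.
Proof.
  intros He H eps Heps. destruct (H eps Heps) as [a [Ha H1]]. exists a; split; auto.
  intros u [Du Hu]. rewrite <- He by auto. apply H1; auto.
Qed.

Lemma Clim_ext s f g t L : (forall u, punctured s t u -> f u = g u) -> Clim s f t L -> Clim s g t L.
Proof.
  intros He [H1 H2]; split; eapply limit1_in_ext; eauto; intros; simpl; rewrite He; auto.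
Qed.

Lemma Clim_const s c t : Clim s (fun _ => c) t c.
Proof.
  split; intros eps Heps; exists 1; split; try lra; intros; simpl; unfold R_dist, Rdist;
  rewrite Rminus_diag_eq, Rabs_R0; auto.
Qed.

Lemma Clim_add s f g t a b : Clim s f t a -> Clim s g t b ->
  Clim s (fun u => Cadd (f u) (g u)) t (Cadd a b).
Proof. intros [H1 H2] [H3 H4]; split; apply limit_plus; auto. Qed.

Lemma Clim_sub s f g t a b : Clim s f t a -> Clim s g t b ->
  Clim s (fun u => Csub (f u) (g u)) t (Csub a b).
Proof. intros [H1 H2] [H3 H4]; split; apply limit_minus; auto. Qed.

Lemma Clim_mul s f g t a b : Clim s f t a -> Clim s g t b ->
  Clim s (fun u => Cmul (f u) (g u)) t (Cmul a b).
Proof.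
  intros [H1 H2] [H3 H4]; split.
  - apply limit_minus; apply limit_mul; auto.
  - apply limit_plus; apply limit_mul; auto.
Qed.

Lemma Clim_conj s f t a : Clim s f t a -> Clim s (fun u => Cconj (f u)) t (Cconj a).
Proof. intros [H1 H2]; split; auto. apply limit_Ropp; auto. Qed.

Lemma limit_id_sub s t : limit1_in (fun u => u - t) (punctured s t) 0 t.
Proof.
  intros eps Heps. exists eps; split; auto. intros u [_ Hu]. simpl in *.
  unfold R_dist, Rdist in *. replace (u - t - 0) with (u - t) by ring. auto.
Qed.

Lemma limit_cst (c : R) D x : limit1_in (fun _ => c) D c x.
Proof.
  intros eps Heps; exists 1; split; try lra; intros; simpl; unfold R_dist, Rdist;
  rewrite Rminus_diag_eq, Rabs_R0; auto.
Qed.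

Lemma Cderiv_cont s f f' t : Cderiv s f f' t -> Clim s f t (f t).
Proof.
  intros Hd.
  assert (Hid : Clim s (fun u => RtoC (u - t)) t C0)
    by (split; [exact (limit_id_sub s t) | exact (limit_cst 0 (punctured s t) t)]).
  (* f u = f t + (u - t) * (difference quotient) *)
  assert (Hsum := Clim_add _ _ _ _ _ _ (Clim_const s (f t) t) (Clim_mul _ _ _ _ _ _ Hid Hd)).
  replace (Cadd (f t) (Cmul C0 (f' t))) with (f t) in Hsum by cring.
  eapply Clim_ext; [| exact Hsum]. intros u [_ Hu].
  assert (u - t <> 0) by lra. apply Cext; cunf; field; auto.
Qed.

Lemma Cderiv_const s c t : Cderiv s (fun _ => c) (fun _ => C0) t.
Proof.
  eapply Clim_ext; [| apply Clim_const].
  intros u _; cring.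
Qed.

Lemma Cderiv_add s f f' g g' t : Cderiv s f f' t -> Cderiv s g g' t ->
  Cderiv s (fun u => Cadd (f u) (g u)) (fun u => Cadd (f' u) (g' u)) t.
Proof.
  intros H1 H2. eapply Clim_ext; [| apply Clim_add; [apply H1 | apply H2]].
  intros u _; cring.
Qed.

Lemma Cderiv_sub s f f' g g' t : Cderiv s f f' t -> Cderiv s g g' t ->
  Cderiv s (fun u => Csub (f u) (g u)) (fun u => Csub (f' u) (g' u)) t.
Proof.
  intros H1 H2. eapply Clim_ext; [| apply Clim_sub; [apply H1 | apply H2]].
  intros u _; cring.
Qed.

Lemma Cderiv_mul s f f' g g' t : Cderiv s f f' t -> Cderiv s g g' t ->
  Cderiv s (fun u => Cmul (f u) (g u)) (fun u => Cadd (Cmul (f' u) (g u)) (Cmul (f u) (g' u))) t.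
Proof.
  intros H1 H2. assert (Hg := Cderiv_cont _ _ _ _ H2).
  eapply Clim_ext; [| apply Clim_add; [apply (Clim_mul _ _ _ _ _ _ H1 Hg)
                                     | apply (Clim_mul _ _ _ _ _ _ (Clim_const s (f t) t) H2)]].
  intros u _; cring.
Qed.

Lemma Cderiv_conj s f f' t :
  Cderiv s f f' t -> Cderiv s (fun u => Cconj (f u)) (fun u => Cconj (f' u)) t.
Proof.
  intros H. eapply Clim_ext; [| apply (Clim_conj _ _ _ _ H)]. intros u _; cring.
Qed.

Lemma Cderiv_Csum s n (f f' : nat -> R -> C) t :
  (forall k, (k < n)%nat -> Cderiv s (f k) (f' k) t) ->
  Cderiv s (fun u => Csum n (fun k => f k u)) (fun u => Csum n (fun k => f' k u)) t.
Proof.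
  induction n; intros Hf; simpl; [apply Cderiv_const |].
  apply Cderiv_add; [apply IHn; intros; apply Hf; lia | apply Hf; lia].
Qed.

Lemma Cderiv_ext s f g f' t : 0 <= t <= s -> (forall u, 0 <= u <= s -> f u = g u) ->
  Cderiv s f f' t -> Cderiv s g f' t.
Proof.
  intros Ht He H. eapply Clim_ext; [| apply H]. intros u [Hu _]. rewrite !He; auto.
Qed.

Lemma Cderiv_ext_d s f f' g' t : f' t = g' t -> Cderiv s f f' t -> Cderiv s f g' t.
Proof. intros E H. unfold Cderiv. rewrite <- E. auto. Qed.

Lemma deriv_to_lim a b f f' t : has_deriv_on a b f f' -> a <= t <= b ->
  limit1_in (fun u => (f u - f t) / (u - t)) (fun u => a <= u <= b /\ u <> t) (f' t) t.
Proof.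
  intros H Ht eps Heps. destruct (H t Ht eps Heps) as [d [Hd H1]].
  exists d; split; auto. intros u [[Hu Hut] Hdist]. apply H1; auto.
Qed.

Lemma Cderiv_of_has_deriv s f f' t : C_has_deriv_on 0 s f f' -> 0 <= t <= s -> Cderiv s f f' t.
Proof.
  intros [H1 H2] Ht. split.
  - eapply limit1_in_ext; [| apply (deriv_to_lim _ _ _ _ _ H1 Ht)].
    intros u _. cunf. unfold Rdiv. ring.
  - eapply limit1_in_ext; [| apply (deriv_to_lim _ _ _ _ _ H2 Ht)].
    intros u _. cunf. unfold Rdiv. ring.
Qed.

(* t is adherent to [0, s] \ {t}, so limits there are unique. *)
Lemma punctured_adh s t : 0 < s -> 0 <= t <= s -> adhDa (punctured s t) t.
Proof.
  intros Hs Ht alp Halp.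
  assert (Hd0 : 0 < Rmin (alp / 2) (s / 2)) by (apply Rmin_glb_lt; lra).
  assert (Hd1 := Rmin_l (alp / 2) (s / 2)). assert (Hd2 := Rmin_r (alp / 2) (s / 2)).
  unfold punctured, Rdist. destruct (Rle_dec t (s / 2)).
  - exists (t + Rmin (alp / 2) (s / 2)). split; [repeat split; lra | rewrite Rabs_right; lra].
  - exists (t - Rmin (alp / 2) (s / 2)). split; [repeat split; lra | rewrite Rabs_left; lra].
Qed.

Lemma Clim_unique s f t a b : 0 < s -> 0 <= t <= s -> Clim s f t a -> Clim s f t b -> a = b.
Proof.
  intros Hs Ht [H1 H2] [H3 H4]. apply Cext.
  eapply single_limit; [apply punctured_adh; eauto | eauto | eauto].
  eapply single_limit; [apply punctured_adh; eauto | eauto | eauto].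
Qed.

(* Extending f from [0, s] to R by clamping makes Stdlib's mean value
   machinery ([null_derivative_loc]) applicable. *)
Definition clamp (s x : R) := Rmax 0 (Rmin s x).

Lemma clamp_in s x : 0 <= s -> 0 <= clamp s x <= s.
Proof. intros. unfold clamp, Rmax, Rmin. repeat destruct Rle_dec; lra. Qed.

Lemma clamp_id s x : 0 <= x <= s -> clamp s x = x.
Proof. intros. unfold clamp, Rmax, Rmin. repeat destruct Rle_dec; lra. Qed.

Lemma clamp_lip s x y : 0 <= x <= s -> Rabs (clamp s y - x) <= Rabs (y - x).
Proof.
  intros. unfold clamp, Rmax, Rmin.
  repeat destruct Rle_dec; unfold Rabs; repeat destruct Rcase_abs; lra.
Qed.

Section ZeroDerivative.
Variables (f : R -> R) (s : R).
Hypothesis Hs : 0 < s.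
Hypothesis Hd : forall t, 0 <= t <= s ->
  limit1_in (fun u => (f u - f t) / (u - t)) (punctured s t) 0 t.

Lemma clamped_derivable x : 0 < x < s -> derivable_pt_lim (fun y => f (clamp s y)) x 0.
Proof.
  intros Hx eps Heps. destruct (Hd x ltac:(lra) eps Heps) as [alp [Halp Hlim]].
  assert (Hm1 := Rmin_l alp (Rmin x (s - x))). assert (Hm2 := Rmin_r alp (Rmin x (s - x))).
  assert (Hm3 := Rmin_l x (s - x)). assert (Hm4 := Rmin_r x (s - x)).
  assert (Hpos : 0 < Rmin alp (Rmin x (s - x))) by (repeat apply Rmin_glb_lt; lra).
  exists (mkposreal _ Hpos). intros h Hh Hhd. simpl in Hhd.
  assert (Hrange : 0 <= x + h <= s) by (unfold Rabs in Hhd; destruct Rcase_abs in Hhd; lra).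
  rewrite !clamp_id by lra.
  replace ((f (x + h) - f x) / h - 0) with ((f (x + h) - f x) / (x + h - x) - 0)
    by (f_equal; f_equal; ring).
  apply (Hlim (x + h)). simpl. unfold R_dist, Rdist.
  replace (x + h - x) with h by ring. repeat split; lra.
Qed.

Lemma clamped_continuous x : 0 <= x <= s -> continuity_pt (fun y => f (clamp s y)) x.
Proof.
  intros Hx eps Heps. destruct (Hd x Hx 1 ltac:(lra)) as [alp [Halp Hlim]].
  exists (Rmin alp eps). split; [apply Rmin_glb_lt; auto |].
  intros y [_ Hy]. simpl in *. unfold R_dist, Rdist in *. rewrite (clamp_id s x Hx).
  assert (Hl := clamp_lip s x y Hx).
  assert (Hm1 := Rmin_l alp eps). assert (Hm2 := Rmin_r alp eps).
  destruct (Req_dec (clamp s y) x) as [-> | Hne].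
  - unfold Rminus. rewrite Rplus_opp_r, Rabs_R0. auto.
  - (* the difference quotient is bounded by 1 near x *)
    assert (Hq : Rabs ((f (clamp s y) - f x) / (clamp s y - x) - 0) < 1)
      by (apply Hlim; repeat split; try apply clamp_in; lra).
    rewrite Rminus_0_r in Hq. unfold Rdiv in Hq. rewrite Rabs_mult, Rabs_inv in Hq.
    assert (Hd0 : 0 < Rabs (clamp s y - x)) by (apply Rabs_pos_lt; lra).
    assert (Rabs (f (clamp s y) - f x) < Rabs (clamp s y - x)).
    { apply (Rmult_lt_reg_r (/ Rabs (clamp s y - x))); [apply Rinv_0_lt_compat; auto |].
      rewrite Rinv_r by lra. auto. }
    lra.
Qed.

Lemma const_of_zero_deriv x : 0 <= x <= s -> f x = f 0.
Proof.
  intros Hx.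
  set (pr := fun y (P : 0 < y < s) =>
         exist (fun l => derivable_pt_lim (fun y => f (clamp s y)) y l) 0 (clamped_derivable y P)).
  assert (Hconst := null_derivative_loc (fun y => f (clamp s y)) 0 s pr clamped_continuous
                      (fun _ _ => eq_refl) x Hx).
  simpl in Hconst. rewrite !clamp_id in Hconst; lra.
Qed.
End ZeroDerivative.

Lemma Cderiv_mvmul s n (H H' : R -> Mat) (p p' : R -> Vec) t :
  (forall m j, (m < n)%nat -> (j < n)%nat -> Cderiv s (fun u => H u m j) (fun u => H' u m j) t) ->
  (forall j, (j < n)%nat -> Cderiv s (fun u => p u j) (fun u => p' u j) t) ->
  forall m, (m < n)%nat ->
  Cderiv s (fun u => mvmul n (H u) (p u) m)
           (fun u => Cadd (mvmul n (H' u) (p u) m) (mvmul n (H u) (p' u) m)) t.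
Proof.
  intros HH Hp m Hm. unfold mvmul.
  eapply Cderiv_ext_d;
    [| apply Cderiv_Csum; intros j Hj; apply Cderiv_mul; [apply HH | apply Hp]; auto].
  cbv beta. rewrite <- Csum_add. reflexivity.
Qed.

Lemma Cderiv_inner s n (f f' g g' : R -> Vec) t :
  (forall m, (m < n)%nat -> Cderiv s (fun u => f u m) (fun u => f' u m) t) ->
  (forall m, (m < n)%nat -> Cderiv s (fun u => g u m) (fun u => g' u m) t) ->
  Cderiv s (fun u => inner n (f u) (g u))
           (fun u => Cadd (inner n (f' u) (g u)) (inner n (f u) (g' u))) t.
Proof.
  intros Hf Hg. unfold inner.
  eapply Cderiv_ext_d;
    [| apply Cderiv_Csum; intros m Hm; apply Cderiv_mul; [apply Cderiv_conj, Hf | apply Hg]; auto].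
  cbv beta. rewrite <- Csum_add. reflexivity.
Qed.

Lemma Cderiv_inner_const s n (v : Vec) (g g' : R -> Vec) t :
  (forall m, (m < n)%nat -> Cderiv s (fun u => g u m) (fun u => g' u m) t) ->
  Cderiv s (fun u => inner n v (g u)) (fun u => inner n v (g' u)) t.
Proof.
  intros Hg. unfold inner.
  eapply Cderiv_ext_d; [| apply Cderiv_Csum; intros m Hm;
    apply Cderiv_mul; [apply (Cderiv_const s (Cconj (v m))) | apply Hg]; auto].
  cbv beta. apply Csum_ext; intros; cring.
Qed.

Lemma Cderiv_unique s f d1 d2 t :
  0 < s -> 0 <= t <= s -> Cderiv s f d1 t -> Cderiv s f d2 t -> d1 t = d2 t.
Proof. intros Hs Ht H1 H2. eapply Clim_unique; eauto. Qed.
Lemma deriv_self_adjoint n s (H H' : R -> Mat) t : 0 < s -> 0 <= t <= s ->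
  (forall th, 0 <= th <= s -> self_adjoint n (H th)) ->
  mat_has_deriv_on n 0 s H H' -> self_adjoint n (H' t).
Proof.
  intros Hs Ht Hsa Hd i j Hi Hj.
  assert (D1 : Cderiv s (fun u => H u i j) (fun u => H' u i j) t)
    by (apply Cderiv_of_has_deriv; auto).
  assert (D2 : Cderiv s (fun u => Cconj (H u j i)) (fun u => Cconj (H' u j i)) t).
  { apply Cderiv_conj. apply Cderiv_of_has_deriv; auto. }
  assert (D3 : Cderiv s (fun u => H u i j) (fun u => Cconj (H' u j i)) t).
  { eapply Cderiv_ext; [auto | | apply D2]. intros u Hu. symmetry. apply Hsa; auto. }
  apply (Cderiv_unique _ _ _ _ _ Hs Ht D1 D3).
Qed.

Lemma eigvec_orthogonal n (H : Mat) (v w : Vec) (l m : R) : self_adjoint n H ->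
  vec_eq n (mvmul n H v) (vscale (RtoC l) v) -> vec_eq n (mvmul n H w) (vscale (RtoC m) w) ->
  l <> m -> inner n v w = C0.
Proof.
  intros Hs Hv Hw Hlm.
  assert (Hsym := herm_inner n H v w Hs).
  rewrite (inner_ext n v v _ _ (fun _ _ => eq_refl) Hw), inner_scal_r in Hsym.
  rewrite (inner_ext n _ _ w w Hv (fun _ _ => eq_refl)), inner_scal_l in Hsym.
  destruct (Classical_Prop.classic (inner n v w = C0)) as [| Hne]; auto.
  exfalso. apply Hlm. symmetry. apply Rminus_diag_uniq.
  apply (Cmul_cancel_real _ (inner n v w)); auto.
  transitivity (Csub (Cmul (RtoC m) (inner n v w)) (Cmul (Cconj (RtoC l)) (inner n v w))); [cring |].
  rewrite Hsym. cring.
Qed.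

Lemma eigenvalue_expectation n (H : Mat) (v : Vec) (E : C) :
  vnorm2 n v = 1 -> vec_eq n (mvmul n H v) (vscale E v) -> inner n v (mvmul n H v) = E.
Proof.
  intros Hv HE.
  rewrite (inner_ext n v v _ _ (fun _ _ => eq_refl) HE), inner_scal_r, inner_vnorm by auto.
  cring.
Qed.

Lemma heisenberg_on_eigvec n (H A : Mat) (E : R -> Mat) (V : nat -> Vec) (l : nat -> R)
    (psi : Vec) (E0 tau : R) i :
  (forall t, is_mexp n (mscale (0, t) H) (E t)) ->
  (forall k, (k < n)%nat -> vec_eq n (mvmul n H (V k)) (vscale (RtoC (l k)) (V k))) ->
  (forall i j, (i < n)%nat -> (j < n)%nat ->
     Csum n (fun k => Cmul (V k i) (Cconj (V k j))) = if Nat.eqb i j then C1 else C0) ->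
  vec_eq n (mvmul n H psi) (vscale (RtoC E0) psi) -> (i < n)%nat ->
  mvmul n (mmul n (mmul n (E tau) A) (E (- tau))) psi i =
  Csum n (fun k => Cmul (Cmul (inner n (V k) (mvmul n A psi)) (V k i)) (cexp (tau * (l k - E0)))).
Proof.
  intros HE He Hc Hpsi Hi.
  rewrite mvmul_mmul, (mvmul_ext n _ _ (vscale (cexp (- tau * E0)) psi)).
  2: { intros m Hm. apply (mexp_eigvec n H (E (- tau)) (- tau) psi E0 (HE (- tau))); auto. }
  rewrite mvmul_vscale, mvmul_mmul.
  rewrite (mvmul_ext n (E tau) (mvmul n A psi)
             (fun m => Csum n (fun k => Cmul (inner n (V k) (mvmul n A psi)) (V k m)))).
  2: { intros m Hm. apply orthonormal_expansion; auto. }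
  rewrite mvmul_comb, <- Csum_scal_l. apply Csum_ext; intros k Hk.
  rewrite (mexp_eigvec n H (E tau) tau (V k) (l k) (HE tau)) by (auto; intros; apply He; auto).
  replace (tau * (l k - E0)) with (- tau * E0 + tau * l k) by ring.
  rewrite <- cexp_add. cring.
Qed.

(* Filtering a spectral sum whose frequencies are 0 or at least Delta: the
   frequency-0 part is a constant and is killed by the odd W, while each
   frequency mu >= Delta contributes i / mu. *)
Lemma Wint_gapped_sum W Delta n (b : nat -> C) (mu : nat -> R) v :
  is_filter_function Delta W -> 0 < Delta ->
  (forall k, (k < n)%nat -> mu k = 0 \/ Delta <= mu k) ->
  Wint W (fun tau => Csum n (fun k => Cmul (b k) (cexp (tau * mu k)))) v ->
  v = Csum n (fun k => if Rle_dec Delta (mu k) then Cmul (b k) (0, / mu k) else C0).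
Proof.
  intros HW HD Hmu Hv.
  assert (Hodd : forall t, t <> 0 -> W (- t) = - W t) by apply HW.
  set (high := fun k => if Rle_dec Delta (mu k) then Cmul (b k) (0, / mu k) else C0).
  assert (Hhigh : Wint W (fun tau => Csum n (fun k =>
      if Rle_dec Delta (mu k) then Cmul (b k) (cexp (tau * mu k)) else C0)) (Csum n high)).
  { apply Wint_Csum; intros k Hk. unfold high. destruct (Rle_dec Delta (mu k)).
    - apply Wint_fourier with (Delta := Delta); auto.
    - apply Wint_zero. }
  assert (Hlow : Wint W (fun _ => Csum n (fun k => if Rle_dec Delta (mu k) then C0 else b k))
                   (Csub v (Csum n high))).
  { eapply Wint_ext; [| apply (Wint_sub _ _ _ _ _ Hv Hhigh)]. intros tau; cbv beta.
    rewrite <- Csum_sub. apply Csum_ext; intros k Hk. destruct (Rle_dec Delta (mu k)).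
    - cring.
    - destruct (Hmu k Hk) as [-> |]; [| lra]. rewrite Rmult_0_r, cexp_0. cring. }
  apply Csub_zero, (Wint_const W _ _ Hodd Hlow).
Qed.

(** The key identity S_Delta(H, H') Psi0 = -i Psi0' *)

Section GroundState.
Variables (n : nat) (s Delta : R) (W : R -> R) (H H' : R -> Mat) (Psi0 Psi0' : R -> Vec).
Variable S : R -> Mat.
Hypothesis Hs : 0 < s.
Hypothesis HD : 0 < Delta.
Hypothesis HW : is_filter_function Delta W.
Hypothesis Hsa : forall th, 0 <= th <= s -> self_adjoint n (H th).
Hypothesis HdH : mat_has_deriv_on n 0 s H H'.
Hypothesis HdP : vec_has_deriv_on n 0 s Psi0 Psi0'.
Hypothesis Hnorm : forall th, 0 <= th <= s -> vnorm2 n (Psi0 th) = 1.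
Hypothesis Hgs : forall th, 0 <= th <= s -> unique_ground_state_with_gap n Delta (H th) (Psi0 th).
Hypothesis Hpt : forall th, 0 <= th <= s -> inner n (Psi0 th) (Psi0' th) = C0.
Hypothesis HS : forall th, 0 <= th <= s -> is_SDelta n W (H th) (H' th) (S th).

(* The ground energy <Psi0|H Psi0>, whose differentiability comes for free. *)
Definition ground_energy (u : R) : C := inner n (Psi0 u) (mvmul n (H u) (Psi0 u)).

Lemma ground_state_eigen u : 0 <= u <= s ->
  vec_eq n (mvmul n (H u) (Psi0 u)) (vscale (ground_energy u) (Psi0 u)).
Proof.
  intros Hu. destruct (Hgs u Hu) as [E0 [HE0 _]].
  unfold ground_energy. rewrite (eigenvalue_expectation n _ _ _ (Hnorm u Hu) HE0). exact HE0.
Qed.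

(* Differentiate <v|H Psi0> in two ways:
   by the product rule, and as ground_energy * <v|Psi0>, using <v|Psi0> = 0. *)
Lemma excited_overlap t (v : Vec) (l E0 : R) : 0 <= t <= s ->
  vec_eq n (mvmul n (H t) v) (vscale (RtoC l) v) ->
  vec_eq n (mvmul n (H t) (Psi0 t)) (vscale (RtoC E0) (Psi0 t)) -> l <> E0 ->
  inner n v (mvmul n (H' t) (Psi0 t)) = Cmul (RtoC (E0 - l)) (inner n v (Psi0' t)).
Proof.
  intros Ht Hv HE Hl.
  assert (HdH_t : forall m j, (m < n)%nat -> (j < n)%nat ->
            Cderiv s (fun u => H u m j) (fun u => H' u m j) t)
    by (intros; apply Cderiv_of_has_deriv; auto).
  assert (HdP_t : forall j, (j < n)%nat -> Cderiv s (fun u => Psi0 u j) (fun u => Psi0' u j) t)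
    by (intros; apply Cderiv_of_has_deriv; auto).
  assert (Horth : inner n v (Psi0 t) = C0) by (eapply eigvec_orthogonal; eauto).
  assert (Hprod : Cderiv s (fun u => inner n v (mvmul n (H u) (Psi0 u)))
     (fun u => inner n v (fun m => Cadd (mvmul n (H' u) (Psi0 u) m) (mvmul n (H u) (Psi0' u) m))) t)
    by (apply Cderiv_inner_const; intros; apply Cderiv_mvmul; auto).
  assert (He' : exists e', Cderiv s ground_energy e' t).
  { eexists. apply Cderiv_inner; [apply HdP_t | intros; apply Cderiv_mvmul; auto]. }
  destruct He' as [e' He'].
  assert (Hscal : Cderiv s (fun u => inner n v (mvmul n (H u) (Psi0 u)))
      (fun u => Cadd (Cmul (e' u) (inner n v (Psi0 u)))
                     (Cmul (ground_energy u) (inner n v (Psi0' u)))) t).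
  { eapply Cderiv_ext;
      [auto | | apply (Cderiv_mul _ _ _ _ _ _ He' (Cderiv_inner_const s n v _ _ t HdP_t))].
    intros u Hu. rewrite (inner_ext n v v _ _ (fun _ _ => eq_refl) (ground_state_eigen u Hu)).
    symmetry. apply inner_scal_r. }
  assert (Eq := Cderiv_unique _ _ _ _ _ Hs Ht Hprod Hscal). cbv beta in Eq.
  assert (HEt : ground_energy t = RtoC E0) by apply (eigenvalue_expectation n _ _ _ (Hnorm t Ht) HE).
  assert (Hl' : inner n v (mvmul n (H t) (Psi0' t)) = Cmul (RtoC l) (inner n v (Psi0' t))).
  { rewrite herm_inner, (inner_ext n _ (vscale (RtoC l) v) _ (Psi0' t) Hv (fun _ _ => eq_refl)),
      inner_scal_l by auto. cring. }
  rewrite inner_add_r, Horth, HEt, Hl' in Eq.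
  apply Csub_zero. transitivity (Csub (Cadd (inner n v (mvmul n (H' t) (Psi0 t)))
      (Cmul (RtoC l) (inner n v (Psi0' t)))) (Cmul (RtoC E0) (inner n v (Psi0' t)))); [cring |].
  rewrite Eq. cring.
Qed.

(* By the gap condition, a unit eigenvector below E0 + Delta is a multiple of
   Psi0; in particular its eigenvalue is E0 and, by parallel transport, it is
   orthogonal to Psi0'. *)
Lemma low_eigvec_in_ground_space t (v : Vec) (l E0 : R) : 0 <= t <= s ->
  vec_eq n (mvmul n (H t) v) (vscale (RtoC l) v) -> inner n v v = C1 ->
  vec_eq n (mvmul n (H t) (Psi0 t)) (vscale (RtoC E0) (Psi0 t)) ->
  (forall (E : C) (w : Vec), vec_nonzero n w -> vec_eq n (mvmul n (H t) w) (vscale E w) ->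
      (exists c : C, vec_eq n w (vscale c (Psi0 t))) \/ E0 + Delta <= Re E) ->
  ~ (E0 + Delta <= l) ->
  l = E0 /\ inner n v (Psi0' t) = C0.
Proof.
  intros Ht Hv Hn HE Hgap Hl.
  assert (Hnz := vec_nonzero_of_norm n v Hn).
  destruct (Hgap (RtoC l) v Hnz Hv) as [[c Hc] | Hc]; [| contradiction].
  split.
  - destruct Hnz as [m [Hm Hvm]].
    assert (E1 : mvmul n (H t) v m = Cmul (RtoC l) (v m)) by (apply Hv; auto).
    assert (E2 : mvmul n (H t) v m = Cmul (RtoC E0) (v m)).
    { rewrite (mvmul_ext n (H t) v (vscale c (Psi0 t)) m Hc), mvmul_vscale, HE, Hc by auto.
      unfold vscale. cring. }
    apply Rminus_diag_uniq, (Cmul_cancel_real _ (v m)); auto.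
    transitivity (Csub (Cmul (RtoC l) (v m)) (Cmul (RtoC E0) (v m))); [cring |].
    rewrite <- E1, <- E2. cring.
  - rewrite (inner_ext n v (vscale c (Psi0 t)) (Psi0' t) (Psi0' t) Hc (fun _ _ => eq_refl)),
      inner_scal_l, Hpt by auto. cring.
Qed.

(* The key identity: expand H' Psi0 in an eigenbasis of H(t). Components in
   the ground space vanish, and each excited component with energy l is
   multiplied by the filter's Fourier transform i / (l - E0); by
   [excited_overlap] this recovers -i Psi0'. *)
Lemma SDelta_ground_state t : 0 <= t <= s -> forall i, (i < n)%nat ->
  mvmul n (S t) (Psi0 t) i = Cmul (0, -1) (Psi0' t i).
Proof.
  intros Ht i Hi.
  destruct (Hgs t Ht) as [E0 [HE Hgap]].
  destruct (self_adjoint_eigenbasis n (H t) (Hsa t Ht)) as [V [l [He [Ho Hc]]]].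
  destruct (HS t Ht) as [E [HEx HI]].
  set (b := fun k => Cmul (inner n (V k) (mvmul n (H' t) (Psi0 t))) (V k i)).
  assert (Hlow : forall k, (k < n)%nat -> ~ (E0 + Delta <= l k) ->
                   l k = E0 /\ inner n (V k) (Psi0' t) = C0).
  { intros k Hk Hkl. apply (low_eigvec_in_ground_space t (V k) (l k) E0); auto.
    rewrite Ho, Nat.eqb_refl by auto. reflexivity. }
  assert (Hint : Wint W (fun tau => Csum n (fun k => Cmul (b k) (cexp (tau * (l k - E0)))))
                   (mvmul n (S t) (Psi0 t) i)).
  { apply (Wint_ext W (fun tau => mvmul n (mmul n (mmul n (E tau) (H' t)) (E (- tau))) (Psi0 t) i)).
    { intros tau. apply (heisenberg_on_eigvec n (H t) (H' t) E V l); auto. }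
    unfold mvmul. apply Wint_Csum. intros j Hj.
    assert (Hij : Wint W (fun tau => mmul n (mmul n (E tau) (H' t)) (E (- tau)) i j) (S t i j))
      by apply (HI i j Hi Hj).
    eapply Wint_ext; [| eapply Wint_ext_v; [| apply (Wint_scal W (Psi0 t j) _ _ Hij)]];
      [intros; cring | cring]. }
  assert (Hfreq : forall k, (k < n)%nat -> l k - E0 = 0 \/ Delta <= l k - E0).
  { intros k Hk. destruct (Rle_dec (E0 + Delta) (l k)) as [| Hk']; [right; lra |].
    left. destruct (Hlow k Hk Hk'). lra. }
  rewrite (Wint_gapped_sum W Delta n b (fun k => l k - E0) _ HW HD Hfreq Hint).
  rewrite (orthonormal_expansion n V (Psi0' t) i Hc Hi), <- Csum_scal_l.
  apply Csum_ext; intros k Hk. destruct (Rle_dec Delta (l k - E0)).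
  - unfold b. rewrite (excited_overlap t (V k) (l k) E0) by (auto; lra).
    assert (l k - E0 <> 0) by lra. apply Cext; cunf; field; auto.
  - destruct (Rle_dec (E0 + Delta) (l k)) as [| Hk']; [lra |].
    destruct (Hlow k Hk Hk') as [_ ->]. cring.
Qed.

End GroundState.

(** Uniqueness for the transport equation *)

(* A solution of phi' = i S phi with S self-adjoint keeps its norm:
   d/dt <phi|phi> = <i S phi|phi> + <phi|i S phi> = 0. *)
Lemma norm2_conserved n s (S : R -> Mat) (phi phi' : R -> Vec) : 0 < s ->
  (forall t, 0 <= t <= s -> forall m, (m < n)%nat ->
     Cderiv s (fun u => phi u m) (fun u => phi' u m) t) ->
  (forall t, 0 <= t <= s -> vec_eq n (phi' t) (vscale Ci (mvmul n (S t) (phi t)))) ->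
  (forall t, 0 <= t <= s -> self_adjoint n (S t)) ->
  forall t, 0 <= t <= s -> Re (inner n (phi t) (phi t)) = Re (inner n (phi 0) (phi 0)).
Proof.
  intros Hs Hd Heq HSa.
  apply (const_of_zero_deriv (fun u => Re (inner n (phi u) (phi u))) s Hs).
  intros t Ht.
  assert (Hzero : Cderiv s (fun u => inner n (phi u) (phi u)) (fun _ => C0) t).
  { eapply Cderiv_ext_d; [| apply (Cderiv_inner s n phi phi' phi phi' t); apply Hd; auto].
    cbv beta. rewrite (inner_ext n (phi' t) _ (phi t) (phi t) (Heq t Ht) (fun _ _ => eq_refl)).
    rewrite (inner_ext n (phi t) (phi t) (phi' t) _ (fun _ _ => eq_refl) (Heq t Ht)).
    rewrite inner_scal_l, inner_scal_r, <- herm_inner by auto. cring. }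
  eapply limit1_in_ext; [| apply (proj1 Hzero)]. intros u _. cunf. unfold Rdiv. ring.
Qed.

Lemma Cderiv_deviation n s (psi psi' : R -> Vec) (U U' : R -> Mat) (c : Vec) t :
  vec_has_deriv_on n 0 s psi psi' -> mat_has_deriv_on n 0 s U U' -> 0 <= t <= s ->
  forall m, (m < n)%nat ->
  Cderiv s (fun u => Csub (psi u m) (mvmul n (U u) c m))
           (fun u => Csub (psi' u m) (mvmul n (U' u) c m)) t.
Proof.
  intros Hpsi HU Ht m Hm. apply Cderiv_sub; [apply Cderiv_of_has_deriv; auto |].
  eapply Cderiv_ext_d; [| apply (Cderiv_mvmul s n U U' (fun _ => c) (fun _ _ => C0) t)]; auto.
  - cbv beta. unfold mvmul at 2. rewrite Csum_zero by (intros; cring). cring.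
  - intros; apply Cderiv_of_has_deriv; auto.
  - intros; apply Cderiv_const.
Qed.

Lemma deviation_equation n (S U U' : Mat) (psi psi' c : Vec) :
  (forall i, (i < n)%nat -> mvmul n S psi i = Cmul (0, -1) (psi' i)) ->
  mat_eq n U' (mmul n (mscale Ci S) U) ->
  vec_eq n (fun m => Csub (psi' m) (mvmul n U' c m))
           (vscale Ci (mvmul n S (fun m => Csub (psi m) (mvmul n U c m)))).
Proof.
  intros HSpsi HU' m Hm. unfold vscale.
  rewrite mvmul_sub, HSpsi, (mvmul_ext_m n U' _ c m Hm HU'), mvmul_mmul by auto.
  assert (HiS : mvmul n (mscale Ci S) (mvmul n U c) m = Cmul Ci (mvmul n S (mvmul n U c) m)).
  { unfold mvmul at 1, mscale. change (mvmul n S (mvmul n U c) m) with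
      (Csum n (fun k => Cmul (S m k) (mvmul n U c k))).
    rewrite <- Csum_scal_l. apply Csum_ext; intros; cring. }
  rewrite HiS. cring.
Qed.

Theorem mainTheorem3
  (n : nat) (s Delta : R) (W : R -> R)
  (H H' : R -> Mat) (Psi0 Psi0' : R -> Vec) (U U' S : R -> Mat) :
  0 < Delta ->
  is_filter_function Delta W ->
  (forall th, 0 <= th <= s -> self_adjoint n (H th)) ->
  mat_has_deriv_on n 0 s H H' ->
  vec_has_deriv_on n 0 s Psi0 Psi0' ->
  (forall th, 0 <= th <= s -> vnorm2 n (Psi0 th) = 1) ->
  (forall th, 0 <= th <= s -> unique_ground_state_with_gap n Delta (H th) (Psi0 th)) ->
  (forall th, 0 <= th <= s -> inner n (Psi0 th) (Psi0' th) = C0) ->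
  (forall th, 0 <= th <= s -> is_SDelta n W (H th) (H' th) (S th)) ->
  mat_has_deriv_on n 0 s U U' ->
  (forall th, 0 <= th <= s -> mat_eq n (U' th) (mmul n (mscale Ci (S th)) (U th))) ->
  mat_eq n (U 0) mid ->
  forall th, 0 <= th <= s -> vec_eq n (Psi0 th) (mvmul n (U th) (Psi0 0)).
Proof.
  intros HD HW Hsa HdH HdP Hnorm Hgs Hpt HS HdU HU' HU0 th Hth m Hm.
  assert (HU0psi : forall k, (k < n)%nat -> mvmul n (U 0) (Psi0 0) k = Psi0 0 k)
    by (intros; rewrite (mvmul_ext_m n (U 0) mid), mvmul_mid by auto; reflexivity).
  destruct (Req_dec s 0) as [Es | Ns].
  { assert (th = 0) as -> by lra. symmetry; auto. }
  assert (Hs : 0 < s) by lra.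
  (* the deviation phi = Psi0 - U Psi0(0) vanishes at 0 and keeps its norm *)
  set (phi := fun u k => Csub (Psi0 u k) (mvmul n (U u) (Psi0 0) k)).
  assert (Hphi0 : Re (inner n (phi 0) (phi 0)) = 0).
  { unfold inner. rewrite Csum_zero; [reflexivity |].
    intros k Hk. unfold phi. rewrite HU0psi by auto. cring. }
  assert (Hconst := norm2_conserved n s S phi
            (fun u k => Csub (Psi0' u k) (mvmul n (U' u) (Psi0 0) k)) Hs
            (fun t Ht => Cderiv_deviation n s Psi0 Psi0' U U' (Psi0 0) t HdP HdU Ht)).
  rewrite Hphi0 in Hconst.
  apply Csub_zero, (inner_self_zero n (phi th)); auto.
  apply Hconst; auto.
  - intros t Ht. apply deviation_equation; auto.
    apply (SDelta_ground_state n s Delta W H H' Psi0 Psi0' S); auto.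
  - intros t Ht. apply (SDelta_self_adjoint n W (H t) (H' t)); auto.
    apply (deriv_self_adjoint n s H H'); auto.
Qed.
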